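(* Let $T\colon(B_1,S_1)\to(B_2,S_2)$ be a morphism of $\mathsf{SubS5^S}$. Then $T$ is a morphism of $\mathsf{SubS5^F}$ (i.e.\ $T^\dagger\circ T\subseteq S_1$ and $S_2\subseteq T\circ T^\dagger$) if and only if both of the following hold: (1) for all $a\in B_1$, $a\mathrel{T}0$ implies $a=0$; (2) for all $b_1,b_2\in B_2$ with $b_1\mathrel{S_2}b_2$ there is $a\in B_1$ with $\neg a\mathrel{T}\neg b_1$ and $a\mathrel{T}b_2$.
   Context: A subordination $S\colon A\to B$ between boolean algebras is a relation with (S1) $0\mathrel{S}0$, $1\mathrel{S}1$; (S2) $a,b\mathrel{S}c\Rightarrow(a\vee b)\mathrel{S}c$; (S3) $a\mathrel{S}c,d\Rightarrow a\mathrel{S}(c\wedge d)$; (S4) $a\le b\mathrel{S}c\le d\Rightarrow a\mathrel{S}d$. An $\mathsf{S5}$-subordination on $B$ additionally satisfies (S5) $a\mathrel{S}b\Rightarrow a\le b$; (S6) $a\mathrel{S}b\Rightarrow\neg b\mathrel{S}\neg a$; (S7) $a\mathrel{S}b\Rightarrow\exists c\,(a\mathrel{S}c\mathrel{S}b)$. $\mathsf{SubS5^S}$: objects $(B,S)$ with $S$ an $\mathsf{S5}$-subordination; morphisms $(B,S)\to(B',S')$ subordinations $T$ with $T\circ S=T=S'\circ T$; identity $S$; relational composition ($a\mathrel{(T_2\circ T_1)}c$ iff $\exists b$, $a\mathrel{T_1}b\mathrel{T_2}c$). For $T\colon B_1\to B_2$, $T^\dagger\colon B_2\to B_1$ is given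 by $b\mathrel{T^\dagger}a\iff\neg a\mathrel{T}\neg b$. $\mathsf{SubS5^F}$ is the wide subcategory of $\mathsf{SubS5^S}$ whose morphisms $T\colon(B_1,S_1)\to(B_2,S_2)$ satisfy $T^\dagger\circ T\subseteq S_1$ and $S_2\subseteq T\circ T^\dagger$. *)

(* boolean algebras are complemented distributive lattices
   with top and bottom, i.e. ctbDistrLatticeType (order.v). *)
From HB Require Import structures.
From mathcomp Require Import all_boot all_order.
Set Implicit Arguments. Unset Strict Implicit. Unset Printing Implicit Defensive.
Import Order.Theory.
Local Open Scope order_scope.

Definition brel (A B : Type) := A -> B -> Prop.

Definition rel_sub (A B : Type) (R R' : brel A B) : Prop :=
  forall a b, R a b -> R' a b.

Definition rel_eq (A B : Type) (R R' : brel A B) : Prop :=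
  forall a b, R a b <-> R' a b.

Definition rcomp (A B C : Type) (T2 : brel B C) (T1 : brel A B) : brel A C :=
  fun a c => exists b, T1 a b /\ T2 b c.

Definition dagger (d1 d2 : Order.disp_t)
  (B1 : ctbDistrLatticeType d1) (B2 : ctbDistrLatticeType d2)
  (T : brel B1 B2) : brel B2 B1 :=
  fun b a => T (~` a) (~` b).

Definition subordination (d1 d2 : Order.disp_t)
  (B1 : ctbDistrLatticeType d1) (B2 : ctbDistrLatticeType d2)
  (S : brel B1 B2) : Prop :=
  [/\ S \bot \bot /\ S \top \top,
      (forall (a b : B1) (c : B2), S a c -> S b c -> S (a `|` b) c),
      (forall (a : B1) (c d : B2), S a c -> S a d -> S a (c `&` d)) &
      (forall (a b : B1) (c d : B2), a <= b -> S b c -> c <= d -> S a d)].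

Definition S5_subordination (d : Order.disp_t) (B : ctbDistrLatticeType d)
  (S : brel B B) : Prop :=
  [/\ subordination S,
      (forall a b : B, S a b -> a <= b),
      (forall a b : B, S a b -> S (~` b) (~` a)) &
      (forall a b : B, S a b -> exists c, S a c /\ S c b)].

Definition SubS5S_morphism (d1 d2 : Order.disp_t)
  (B1 : ctbDistrLatticeType d1) (B2 : ctbDistrLatticeType d2)
  (S1 : brel B1 B1) (S2 : brel B2 B2) (T : brel B1 B2) : Prop :=
  [/\ subordination T, rel_eq (rcomp T S1) T & rel_eq (rcomp S2 T) T].

Definition SubS5F_morphism (d1 d2 : Order.disp_t)
  (B1 : ctbDistrLatticeType d1) (B2 : ctbDistrLatticeType d2)
  (S1 : brel B1 B1) (S2 : brel B2 B2) (T : brel B1 B2) : Prop :=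
  [/\ SubS5S_morphism S1 S2 T,
      rel_sub (rcomp (dagger T) T) S1 &
      rel_sub S2 (rcomp T (dagger T))].

From HB Require Import structures.
From mathcomp Require Import all_boot all_order.
Import Order.Theory.

Set Implicit Arguments.
Unset Strict Implicit.
Local Open Scope order_scope.

(* Condition (2) is literally S2 ⊆ T ∘ T†, so only T† ∘ T ⊆ S1 needs work.
   If a T b and ¬c T ¬b, factor both through S1 (T = T ∘ S1): a S1 e T b and
   ¬c S1 f T ¬b.  Then e ∧ f T (b ∧ ¬b) = 0, so e ∧ f = 0 by (1), i.e.
   e ≤ ¬f; hence a S1 ¬f S1 c.  Conversely a T 0 gives a (T† ∘ T) 0 through
   0 T† 0, i.e. 1 T 1, and a S1 0 forces a = 0. *)

Section S5Subordination.

Variables (d : Order.disp_t) (B : ctbDistrLatticeType d) (S : brel B B).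
Hypothesis S5S : S5_subordination S.

Lemma S5_subordination_le (a b : B) : S a b -> a <= b.
Proof. by case: S5S => _ + _ _; apply. Qed.

Lemma S5_subordination_bot (a : B) : S a \bot -> a = \bot.
Proof. by move/S5_subordination_le; rewrite lex0 => /eqP. Qed.

Lemma S5_subordination_trans (a b c : B) : S a b -> S b c -> S a c.
Proof.
move=> Sab Sbc; case: S5S => -[_ _ _ S_mono] _ _ _.
exact: S_mono _ _ _ _ (lexx a) Sab (S5_subordination_le Sbc).
Qed.

Lemma S5_subordination_complL (a b : B) : S (~` a) b -> S (~` b) a.
Proof. by case: S5S => _ _ S_compl _ /S_compl; rewrite complK. Qed.

End S5Subordination.

Lemma subordination_meet_compl (d1 d2 : Order.disp_t)
    (B1 : ctbDistrLatticeType d1) (B2 : ctbDistrLatticeType d2)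
    (T : brel B1 B2) (e f : B1) (b : B2) :
  subordination T -> T e b -> T f (~` b) -> T (e `&` f) \bot.
Proof.
case=> _ _ T_meet T_mono Teb Tfb; rewrite -(meetxC b).
by apply: T_meet; [exact: T_mono _ _ _ _ (leIl e f) Teb (lexx _)
                  |exact: T_mono _ _ _ _ (leIr f e) Tfb (lexx _)].
Qed.

Section DaggerComposite.

Variables (d1 d2 : Order.disp_t)
  (B1 : ctbDistrLatticeType d1) (B2 : ctbDistrLatticeType d2)
  (S1 : brel B1 B1) (T : brel B1 B2).
Hypothesis S5S1 : S5_subordination S1.

Lemma dagger_comp_sub (Tsub : subordination T) :
    rel_sub T (rcomp T S1) -> (forall a, T a \bot -> a = \bot) ->
  rel_sub (rcomp (dagger T) T) S1.
Proof.
move=> T_factor T_bot a c [b [Tab Tcb]].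
have [e [S1ae Teb]] := T_factor _ _ Tab.
have [f [S1cf Tfb]] := T_factor _ _ Tcb.
have ef_bot : e `&` f = \bot.
  by apply/T_bot/(subordination_meet_compl Tsub Teb Tfb).
have S1af : S1 a (~` f).
  case: S5S1 => -[_ _ _ S1_mono] _ _ _.
  by apply: S1_mono _ _ _ _ (lexx a) S1ae _; rewrite -disj_leC ef_bot.
exact: S5_subordination_trans S1af (S5_subordination_complL S5S1 S1cf).
Qed.

Lemma bot_of_dagger_comp_sub : T \top \top ->
    rel_sub (rcomp (dagger T) T) S1 -> forall a, T a \bot -> a = \bot.
Proof.
move=> T11 sub a Ta0; apply: (S5_subordination_bot S5S1).
by apply: sub; exists \bot; split; rewrite // /dagger !compl0.
Qed.

End DaggerComposite.

Theorem lemma6p5 (d1 d2 : Order.disp_t)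
  (B1 : ctbDistrLatticeType d1) (B2 : ctbDistrLatticeType d2)
  (S1 : brel B1 B1) (S2 : brel B2 B2) (T : brel B1 B2) :
  S5_subordination S1 -> S5_subordination S2 ->
  SubS5S_morphism S1 S2 T ->
  (SubS5F_morphism S1 S2 T <->
   ((forall a : B1, T a \bot -> a = \bot) /\
    (forall b1 b2 : B2, S2 b1 b2 ->
       exists a : B1, T (~` a) (~` b1) /\ T a b2))).
Proof.
move=> S5S1 _ HT; have [Tsub T_S1 _] := HT.
have T11 : T \top \top by case: Tsub => -[].
split.
- case=> _ dag_sub S2_sub; split; first exact: bot_of_dagger_comp_sub dag_sub.
  by move=> b1 b2 /S2_sub.
- case=> T_bot S2_sub; split => //.
  have T_factor : rel_sub T (rcomp T S1) by move=> a b /T_S1.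
  exact: dagger_comp_sub Tsub T_factor T_bot.
Qed.
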